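(* Under the setting and hypotheses (H1)–(H5) in the context, let $\psi_0$ be a locally uniform limit on $[0,T]\times\mathbb{R}$ of a subsequence $\psi_{\varepsilon_n}$ with $\varepsilon_n\to0$. Then $\psi_0$ is a viscosity subsolution of \[ 1=\int_0^\infty\Phi(a)e^{a\,\partial_t\psi(t,x)}\,\mathrm{d}a\int_{\mathbb{R}}\omega(z)e^{z\,\partial_x\psi(t,x)}\,\mathrm{d}z, \] i.e. for every $\Psi\in C^2(\mathbb{R}_+\times\mathbb{R})$ such that $\psi_0-\Psi$ has a local maximum at $(t_0,x_0)$, one has $1\ge\int_0^\infty\int_{\mathbb{R}}\Phi(a)\omega(z)\exp[a\partial_t\Psi(t_0,x_0)+z\partial_x\Psi(t_0,x_0)]\,\mathrm{d}z\,\mathrm{d}a$.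
   Context: Fix $\mu\in(0,1)$, $\sigma>0$, $T>0$. Let $\beta(a)=\mu/(1+a)$ for $a\ge0$, $\Phi(a)=\beta(a)\exp(-\int_0^a\beta(s)\,\mathrm{d}s)=\mu(1+a)^{-1-\mu}$, and $\omega(z)=\frac{1}{\sigma\sqrt{2\pi}}e^{-z^2/(2\sigma^2)}$. For each $\varepsilon>0$ the initial datum is a function $\phi^0_\varepsilon(x,a)$, $x\in\mathbb{R}$, $a\in[0,1)$, of the form $\phi_\varepsilon^0(x,a)=v(x)+\varepsilon\eta(x,a)$, where: (H1) $v$ is bounded; (H2) $a\mapsto\exp(-\inf_x\eta(x,a))$ belongs to $L^1$; (H3) there is $C>0$ such that for all $\varepsilon>0$ and $x\in\mathbb{R}$, $\int_0^1\int_{\mathbb{R}}\Phi(a)\omega(z)e^{\int_0^a\beta}e^{-\eta(x-\varepsilon z,a)}\,\mathrm{d}z\,\mathrm{d}a>e^{-C/\varepsilon}$; (H4) $\phi^0_\varepsilon$ is Lipschitz in $x$ uniformly in $\varepsilon\in(0,1)$; (H5) there is $\mathfrak{C}_{xx}\in\mathbb{R}$ with $\partial_x^2\phi_\varepsilon^0\le\mathfrak{C}_{xx}$ in the sense of distributions. Let $n_\varepsilon(t,x,a)\ge0$ solve $\partial_t n_\varepsilon+\frac1\varepsilon\partial_a n_\varepsilon+\frac1\varepsilon\beta(a)n_\varepsilon=0$ for $t\ge0,a>0,x\in\mathbb{R}$, with $n_\varepsilon(t,x,0)=\int_0^\infty\int_{\mathbb{R}}\beta(a)\omega(z)n_\varepsilon(t,x-\varepsilon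 z,a)\,\mathrm{d}z\,\mathrm{d}a$ and $n_\varepsilon(0,x,a)=\exp(-\phi^0_\varepsilon(x,a)/\varepsilon)$ for $a\in[0,1)$, $n_\varepsilon(0,x,a)=0$ for $a\ge1$. Set $\phi_\varepsilon=-\varepsilon\ln n_\varepsilon$ and $\psi_\varepsilon(t,x)=\phi_\varepsilon(t,x,0)$. Equivalently, $\psi_\varepsilon$ satisfies for $t>0$: $1=\int_0^{t/\varepsilon}\!\int_{\mathbb{R}}\Phi(a)\omega(z)e^{[\psi_\varepsilon(t,x)-\psi_\varepsilon(t-\varepsilon a,x-\varepsilon z)]/\varepsilon}\,\mathrm{d}z\,\mathrm{d}a+\int_0^1\!\int_{\mathbb{R}}\Phi(a+t/\varepsilon)\omega(z)e^{[\psi_\varepsilon(t,x)-\phi^0_\varepsilon(x-\varepsilon z,a)]/\varepsilon+\int_0^a\beta}\,\mathrm{d}z\,\mathrm{d}a$. *)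

From HB Require Import structures.
From mathcomp Require Import all_boot all_order all_algebra.
From mathcomp Require Import all_classical all_reals all_analysis.
Set Implicit Arguments. Unset Strict Implicit. Unset Printing Implicit Defensive.
Import Order.TTheory GRing.Theory Num.Theory.
Import numFieldNormedType.Exports.
Local Open Scope classical_set_scope.
Local Open Scope ring_scope.

Section Defs.
Variable R : realType.

Definition beta (mu a : R) : R := mu / (1 + a).
(* int_0^a beta(s) ds = mu ln(1+a) (closed form, a >= 0) *)
Definition Bint (mu a : R) : R := mu * ln (1 + a).
(* Phi(a) = beta(a) exp(-int_0^a beta) = mu (1+a)^(-1-mu) *)
Definition Phi (mu a : R) : R := beta mu a * expR (- Bint mu a).
Definition omega (sigma z : R) : R :=
  (sigma * Num.sqrt (2 * pi))^-1 * expR (- (z ^+ 2) / (2 * sigma ^+ 2)).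

Definition phi0 (v : R -> R) (eta : R -> R -> R) (eps x a : R) : R :=
  v x + eps * eta x a.

Definition nonneg_test_fun (chi : R -> R) : Prop :=
  (forall x, 0 <= chi x) /\
  (exists M : R, forall x, M < `|x| -> chi x = 0) /\
  (forall (n : nat) (x : R), derivable (iter n (fun f : R -> R => derive1 f) chi) x 1).

Definition dist_d2_le (f : R -> R) (C : R) : Prop :=
  forall chi, nonneg_test_fun chi ->
    Rintegral lebesgue_measure setT (fun x => f x * (derive1 (derive1 chi)) x)
    <= C * Rintegral lebesgue_measure setT chi.

Definition dt (Psi : R -> R -> R) : R -> R -> R :=
  fun t x => derive1 (fun s => Psi s x) t.
Definition dx (Psi : R -> R -> R) : R -> R -> R :=
  fun t x => derive1 (fun y => Psi t y) x.

Definition C2_at (Psi : R -> R -> R) (t x : R) : Prop :=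
  [/\ derivable (fun s => Psi s x) t 1, derivable (fun y => Psi t y) x 1,
      (forall F, F = dt Psi \/ F = dx Psi ->
         derivable (fun s => F s x) t 1 /\ derivable (fun y => F t y) x 1) &
      (forall F, F \in [:: Psi; dt Psi; dx Psi; dt (dt Psi); dx (dt Psi);
                        dt (dx Psi); dx (dx Psi)] ->
         {for (t, x), continuous (fun p : R * R => F p.1 p.2)})].

Definition C2_pos (Psi : R -> R -> R) : Prop :=
  forall t x, 0 < t -> C2_at Psi t x.

End Defs.

(* Penalize the test function: (t0, x0) is then a strict local maximum of
   psi0 - Psi - (t - t0)^2 - (x - x0)^2, so for small eps = eps_n an
   eps^2-approximate maximizer (t, x) of the same expression with psi_eps lies
   close to (t0, x0) (psi_eps need not be continuous, hence the approximate
   maximizer). Comparing its value with the points (t - eps a, x - eps z) and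
   expanding Psi to first order gives, for a in [0, A] and |z| <= Z,
     a dt Psi + z dx Psi - delta <= (psi_eps(t, x) - psi_eps(t - eps a, x - eps z)) / eps.
   Inserting this into the renewal equation, whose initial-data term is
   nonnegative, bounds e^-delta (int_0^A Phi e^(a dt Psi)) (int_-Z^Z omega e^(z dx Psi))
   by 1; letting delta -> 0 and A, Z -> oo gives the claim. *)

From HB Require Import structures.
From mathcomp Require Import all_boot all_order all_algebra.
From mathcomp Require Import all_classical all_reals all_analysis.
From mathcomp Require Import ring lra measurable_realfun.
Set Implicit Arguments. Unset Strict Implicit. Unset Printing Implicit Defensive.
Import Order.TTheory GRing.Theory Num.Theory.
Import numFieldNormedType.Exports.
Local Open Scope classical_set_scope.
Local Open Scope ring_scope.

Section nonneg_integral.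
Local Open Scope ereal_scope.
Context d (T : measurableType d) (R : realType) (mu : {measure set T -> \bar R}).

(* No measurability is assumed: the exponent built from psi_eps in the renewal
   equation need not be measurable. *)
Lemma ge0_le_integral_subset (D D' : set T) (f g : T -> \bar R) :
  D `<=` D' -> (forall x, D x -> 0 <= f x) -> (forall x, D' x -> 0 <= g x) ->
  (forall x, D x -> f x <= g x) ->
  \int[mu]_(x in D) f x <= \int[mu]_(x in D') g x.
Proof.
move=> DD' f0 g0 fg; rewrite !ge0_integralE//.
apply: ereal_sup_le => _ [h hf <-]; exists h => //= x.
apply: le_trans (hf x) _; rewrite !patchE.
case: ifPn => [/set_mem Dx|_]; first by rewrite mem_set ?fg//; exact: DD'.
by case: ifPn => // /set_mem; exact: g0.
Qed.

Lemma ge0_integralM_le_iterated (D1 D2 E1 E2 : set T) (k : \bar R) (G H : T -> \bar R)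
    (F : T -> T -> \bar R) :
  measurable D1 -> measurable D2 -> measurable_fun D1 G -> measurable_fun D2 H ->
  0 <= k -> (forall a, D1 a -> 0 <= G a) -> (forall z, D2 z -> 0 <= H z) ->
  D1 `<=` E1 -> D2 `<=` E2 -> (forall a z, E1 a -> E2 z -> 0 <= F a z) ->
  (forall a z, D1 a -> D2 z -> k * (G a * H z) <= F a z) ->
  k * ((\int[mu]_(a in D1) G a) * (\int[mu]_(z in D2) H z)) <=
    \int[mu]_(a in E1) \int[mu]_(z in E2) F a z.
Proof.
move=> mD1 mD2 mG mH k0 G0 H0 DE1 DE2 F0 GHF.
have kH0 z : D2 z -> 0 <= k * H z by move=> D2z; apply: mule_ge0 => //; exact: H0.
have kK0 : 0 <= \int[mu]_(z in D2) (k * H z) by exact: integral_ge0.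
have mkH : measurable_fun D2 (fun z => k * H z) by exact: measurable_funeM.
rewrite muleCA -ge0_integralZl//.
rewrite -ge0_integralZr//; apply: ge0_le_integral_subset => //.
- by move=> a Da; apply: mule_ge0 => //; exact: G0.
- by move=> a Ea; apply: integral_ge0 => z Ez; exact: F0.
move=> a Da; rewrite -ge0_integralZl//; last exact: G0.
apply: ge0_le_integral_subset => //.
- by move=> z D2z; apply: mule_ge0; [exact: G0|exact: kH0].
- by move=> z E2z; apply: F0 => //; exact: DE1.
by move=> z D2z; rewrite muleCA; exact: GHF.
Qed.

End nonneg_integral.

Section lebesgue_truncation.
Local Open Scope ereal_scope.
Context (R : realType).
Local Notation lebesgue := (@lebesgue_measure R).

Lemma ge0_integral_le_truncations (D : set R) (f : R -> \bar R) (M : \bar R) :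
  measurable D -> measurable_fun D f -> (forall x, D x -> 0 <= f x) ->
  (forall n : nat, \int[lebesgue]_(x in D `&` `[(- n%:R)%R, (n%:R)%R]) f x <= M) ->
  \int[lebesgue]_(x in D) f x <= M.
Proof.
move=> mD mf f0 fM; pose F n := D `&` `[(- n%:R)%R, (n%:R : R)].
have mF n : measurable (F n) by exact: measurableI.
have ndF : nondecreasing_seq F.
  move=> m n mn; rewrite subsetEset; apply: setIS => x /=; rewrite !in_itv/= => /andP[xm mx].
  have : (m%:R <= n%:R :> R)%R by rewrite ler_nat.
  by move=> ?; apply/andP; split; lra.
have DF : \bigcup_n F n = D.
  apply/seteqP; split=> [x [n _ []]//|x Dx].
  exists (Num.truncn `|x|).+1 => //; split => //=; rewrite in_itv/= -ler_norml.
  exact/ltW/truncnS_gt.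
have cvgF := ge0_nondecreasing_set_cvg_integral (mu := lebesgue) ndF mF
  (fun n => measurable_funS mD (@subIsetl _ _ _) mf) (fun n x Fx => f0 x Fx.1).
rewrite -DF -(cvg_lim _ cvgF)//; apply: lime_le; first exact: cvgP cvgF.
exact: nearW.
Qed.

Lemma ge0_integral_prod_le1 (D : set R) (G H : R -> R) :
  measurable D -> (forall a, D a -> (0 <= G a)%R) -> (forall z, (0 <= H z)%R) ->
  measurable_fun D G -> measurable_fun [set: R] H ->
  (forall (A Z : nat) (c : R), (0 < c < 1)%R ->
    c%:E * ((\int[lebesgue]_(a in D `&` `[(- A%:R)%R, (A%:R)%R]) (G a)%:E) *
            (\int[lebesgue]_(z in `[(- Z%:R)%R, (Z%:R)%R]) (H z)%:E)) <= 1) ->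
  \int[lebesgue]_(a in D) \int[lebesgue]_(z in [set: R]) (G a * H z)%:E <= 1.
Proof.
move=> mD G0 H0 mG mH bound.
have mGe : measurable_fun D (EFin \o G) by exact/measurable_EFinP.
have mHe : measurable_fun [set: R] (EFin \o H) by exact/measurable_EFinP.
have H0e z : [set: R] z -> 0 <= (H z)%:E by rewrite lee_fin.
set K := \int[lebesgue]_(z in [set: R]) (H z)%:E.
have K0 : 0 <= K by exact: integral_ge0.
have JK A : (\int[lebesgue]_(a in D `&` `[(- A%:R)%R, (A%:R)%R]) (G a)%:E) * K <= 1.
  have J0 : 0 <= \int[lebesgue]_(a in D `&` `[(- A%:R)%R, (A%:R)%R]) (G a)%:E.
    by apply: integral_ge0 => a [Da _]; rewrite lee_fin G0.
  rewrite -ge0_integralZl//; apply: ge0_integral_le_truncations => //.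
  - exact: measurable_funeM.
  - by move=> z _; apply: mule_ge0 => //; rewrite lee_fin.
  - move=> n; rewrite setTI ge0_integralZl//.
    + apply/lee_mul01Pr => [|c c01]; last exact: bound.
      by apply: mule_ge0 => //; apply: integral_ge0 => z _; rewrite lee_fin.
    + exact: measurable_funS mHe.
    + by move=> z _; rewrite lee_fin.
have -> : \int[lebesgue]_(a in D) \int[lebesgue]_(z in [set: R]) (G a * H z)%:E =
          \int[lebesgue]_(a in D) ((G a)%:E * K).
  apply: eq_integral => a /set_mem Da; rewrite -ge0_integralZl ?lee_fin ?G0//.
apply: ge0_integral_le_truncations => //.
- exact: emeasurable_funM.
- by move=> a Da; apply: mule_ge0 => //; rewrite lee_fin G0.
- move=> n; rewrite ge0_integralZr//.
  + exact: measurableI.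
  + exact: measurable_funS mGe.
  + by move=> a [Da _]; rewrite lee_fin G0.
Qed.

End lebesgue_truncation.

Section kernels.
Context (R : realType).

Lemma Phi_ge0 (mu a : R) : 0 <= mu -> 0 <= a -> 0 <= Phi mu a.
Proof.
move=> mu0 a0; rewrite /Phi /beta mulr_ge0 ?expR_ge0// divr_ge0//; lra.
Qed.

Lemma omega_ge0 (sigma z : R) : 0 <= sigma -> 0 <= omega sigma z.
Proof.
by move=> s0; rewrite /omega mulr_ge0 ?expR_ge0// invr_ge0 mulr_ge0 ?sqrtr_ge0.
Qed.

Lemma measurable_Phi (mu : R) : measurable_fun (`[0%R, +oo[ : set R) (Phi mu).
Proof.
have mln : measurable_fun [set: R] (fun a => ln (1 + a)).
  apply: measurableT_comp; first exact: measurable_ln.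
  exact: measurable_funD.
have mPhi : measurable_fun (`[0%R, +oo[ : set R)
    (fun a => mu * expR (- ln (1 + a)) * expR (- (mu * ln (1 + a)))).
  apply: measurable_funTS; apply: measurable_funM; last first.
    apply: measurableT_comp; first exact: measurable_expR.
    exact/measurable_funN/measurable_funM.
  apply: measurable_funM => //; apply: measurableT_comp; first exact: measurable_expR.
  exact: measurable_funN.
apply: (eq_measurable_fun _ _ mPhi) => a; rewrite inE/= in_itv/= andbT => a0.
by rewrite /Phi /beta /Bint expRN lnK// posrE; lra.
Qed.

Lemma measurable_omega (sigma : R) : measurable_fun [set: R] (omega sigma).
Proof.
apply: measurable_funM => //; apply: measurableT_comp; first exact: measurable_expR.
by apply: measurable_funM => //; apply/measurable_funN/measurable_funX.
Qed.

Lemma measurable_Phi_expR (mu p : R) :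
  measurable_fun (`[0%R, +oo[ : set R) (fun a => Phi mu a * expR (a * p)).
Proof.
apply: measurable_funM; first exact: measurable_Phi.
by apply/measurable_funTS/measurableT_comp; [exact: measurable_expR|exact: measurable_funM].
Qed.

Lemma measurable_omega_expR (sigma q : R) :
  measurable_fun [set: R] (fun z => omega sigma z * expR (z * q)).
Proof.
apply: measurable_funM; first exact: measurable_omega.
by apply: measurableT_comp; [exact: measurable_expR|exact: measurable_funM].
Qed.

End kernels.

Section renewal.
Local Open Scope ereal_scope.
Context (R : realType).

Lemma renewal_truncated_le1 (mu sigma p q dl c : R) (A Z : nat) (f : R -> R -> R) :
  (0 < mu)%R -> (0 < sigma)%R -> (A%:R <= c)%R ->
  (forall a z, (0 <= a <= A%:R)%R -> (`|z| <= Z%:R)%R ->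
     (a * p + z * q - dl <= f a z)%R) ->
  \int[lebesgue_measure]_(a in `[0%R, c]) \int[lebesgue_measure]_(z in [set: R])
     (Phi mu a * omega sigma z * expR (f a z))%:E <= 1 ->
  (expR (- dl))%:E *
  ((\int[lebesgue_measure]_(a in `[0%R, +oo[ `&` `[(- A%:R)%R, (A%:R)%R])
      (Phi mu a * expR (a * p))%:E) *
   (\int[lebesgue_measure]_(z in `[(- Z%:R)%R, (Z%:R)%R])
      (omega sigma z * expR (z * q))%:E)) <= 1.
Proof.
move=> mu0 s0 Ac lb_f le1.
set IA := `[0%R, +oo[ `&` _; set IZ := `[_, _]%classic.
have IA0 a : IA a -> (0 <= a)%R by case; rewrite /= in_itv/= andbT.
have kernel0 a z : (0 <= a)%R -> (0 <= Phi mu a * omega sigma z)%R.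
  by move=> a0; exact: mulr_ge0 (Phi_ge0 (ltW mu0) a0) (omega_ge0 _ (ltW s0)).
apply: le_trans le1; apply: ge0_integralM_le_iterated.
- exact: measurableI.
- exact: measurable_itv.
- apply/measurable_EFinP; apply: measurable_funS (measurable_Phi_expR mu p) => //.
  exact: subIsetl.
- by apply/measurable_EFinP/measurable_funTS; exact: measurable_omega_expR.
- by rewrite lee_fin expR_ge0.
- move=> a /IA0 a0; rewrite lee_fin.
  exact: mulr_ge0 (Phi_ge0 (ltW mu0) a0) (expR_ge0 _).
- by move=> z _; rewrite lee_fin; exact: mulr_ge0 (omega_ge0 _ (ltW s0)) (expR_ge0 _).
- move=> a /[dup] /IA0 a0 [_]; rewrite /= !in_itv/= a0 => /andP[_ aA].
  exact: le_trans Ac.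
- by [].
- move=> a z; rewrite /= in_itv/= => /andP[a0 _] _.
  by rewrite lee_fin mulr_ge0 ?expR_ge0 ?kernel0.
move=> a z IAa; rewrite /IZ/= in_itv/= -ler_norml => zZ; rewrite -!EFinM lee_fin.
have aA : (0 <= a <= A%:R)%R.
  by rewrite (IA0 _ IAa); case: IAa => _; rewrite /= in_itv/= => /andP[].
rewrite (_ : expR (- dl) * (Phi mu a * expR (a * p) * (omega sigma z * expR (z * q))) =
  Phi mu a * omega sigma z * expR (a * p + z * q - dl))%R; last by rewrite !expRD; ring.
by rewrite ler_wpM2l ?kernel0 ?(IA0 _ IAa)// ler_expR lb_f.
Qed.

End renewal.

Section real_analysis.
Context (R : realType).

Lemma exists_pos_le2 (a b : R) : 0 < a -> 0 < b -> exists2 c : R, 0 < c & c <= a /\ c <= b.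
Proof.
move=> a0 b0; exists (Num.min a b); first by rewrite lt_min a0 b0.
by rewrite !ge_min !lexx orbT.
Qed.

Lemma approx_argmax (T : Type) (S : set T) (f : T -> R) (h : R) :
  0 < h -> S !=set0 -> (exists M, forall p, S p -> f p <= M) ->
  exists2 p, S p & forall q, S q -> f q <= f p + h.
Proof.
move=> h0 [p0 Sp0] [M fM].
have supf : has_sup (f @` S).
  by split; [exists (f p0), p0 | exists M => _ [p Sp <-]; exact: fM].
have [_ [p Sp <-] ltp] := sup_adherent h0 supf.
exists p => // q Sq; have := sup_upper_bound supf (ex_intro2 _ _ q Sq erefl).
lra.
Qed.

Lemma mvt_linear_approx (g : R -> R) (x0 r c e u v : R) :
  (forall w, `|w - x0| < r -> derivable g w 1 /\ `|derive1 g w - c| <= e) ->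
  `|u - x0| < r -> `|v - x0| < r ->
  `|g v - g u - c * (v - u)| <= e * `|v - u|.
Proof.
move=> dg; wlog uv : u v / u <= v.
  move=> wlog_uv ur vr; have [uv|/ltW vu] := leP u v; first exact: wlog_uv uv ur vr.
  rewrite -normrN distrC.
  have -> : - (g v - g u - c * (v - u)) = g u - g v - c * (u - v) by ring.
  exact: wlog_uv vu vr ur.
move=> ur vr; have inr w : u <= w <= v -> `|w - x0| < r.
  move: ur vr; rewrite !ltr_norml => /andP[? ?] /andP[? ?] /andP[? ?].
  by apply/andP; split; lra.
have [w /[!in_itv]/= wuv ->] :
    exists2 w, w \in `[u, v] & g v - g u = derive1 g w * (v - u).
  apply: MVT_segment => //.
    move=> w /[!in_itv]/= /andP[uw wv]; rewrite derive1E; apply: derivableP.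
    by have [] := dg w (inr w _); rewrite ?(ltW uw) ?(ltW wv).
  apply: derivable_within_continuous => w /[!in_itv]/= wuv.
  exact: (dg w (inr w wuv)).1.
rewrite -mulrBl normrM ler_wpM2r//; exact: (dg w (inr w wuv)).2.
Qed.

Lemma continuous2_box (F : R -> R -> R) (t0 x0 e : R) :
  {for (t0, x0), continuous (fun p : R * R => F p.1 p.2)} -> 0 < e ->
  exists2 r, 0 < r & forall s y, `|s - t0| < r -> `|y - x0| < r ->
    `|F s y - F t0 x0| < e.
Proof.
move=> cF e0; have [r r0 Fr] := (nbhs_ballP _ _).1 ((cvgrPdist_lt _ _).1 cF e e0).
exists r => // s y st yx; rewrite distrC; apply: (Fr (s, y)).
by split; rewrite /= -ball_normE /ball_/= distrC.
Qed.

Definition tangent_approx (Psi : R -> R -> R) (t0 x0 eta rho : R) :=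
  forall t x s y, `|t - t0| < rho -> `|x - x0| < rho -> `|s - t0| < rho -> `|y - x0| < rho ->
    `|Psi t x - Psi s y - (dt Psi t0 x0 * (t - s) + dx Psi t0 x0 * (x - y))|
      <= eta * (`|t - s| + `|x - y|).

Lemma C2_pos_tangent_approx (Psi : R -> R -> R) (t0 x0 eta : R) :
  C2_pos Psi -> 0 < t0 -> 0 < eta -> exists2 rho, 0 < rho & tangent_approx Psi t0 x0 eta rho.
Proof.
move=> C2 t00 eta0; have [_ _ _ cont] := C2 t0 x0 t00.
have [r1 r10 near_dt] : exists2 r1, 0 < r1 & forall s y, `|s - t0| < r1 ->
    `|y - x0| < r1 -> `|dt Psi s y - dt Psi t0 x0| < eta.
  by apply: continuous2_box eta0; apply: cont; rewrite !inE eqxx !orbT.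
have [r2 r20 near_dx] : exists2 r2, 0 < r2 & forall s y, `|s - t0| < r2 ->
    `|y - x0| < r2 -> `|dx Psi s y - dx Psi t0 x0| < eta.
  by apply: continuous2_box eta0; apply: cont; rewrite !inE eqxx !orbT.
have [r r0 [rr1 rr2]] := exists_pos_le2 r10 r20.
have [rho rho0 [rho_t0 rho_r]] := exists_pos_le2 t00 r0.
exists rho => // t x s y tr xr sr yr.
have lt_r (z z0 : R) : `|z - z0| < rho -> `|z - z0| < r1 /\ `|z - z0| < r2.
  by move=> /lt_le_trans lt; split; apply: lt; lra.
have pos w : `|w - t0| < rho -> 0 < w by rewrite ltr_norml => /andP[? _]; lra.
have Et : `|Psi t x - Psi s x - dt Psi t0 x0 * (t - s)| <= eta * `|t - s|.
  apply: (mvt_linear_approx (g := Psi^~ x) (x0 := t0) (r := rho)) => // w wr; split.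
    by have [dtx _ _ _] := C2 w x (pos w wr); exact: dtx.
  by apply/ltW/near_dt; [exact: (lt_r _ _ wr).1 | exact: (lt_r _ _ xr).1].
have Ex : `|Psi s x - Psi s y - dx Psi t0 x0 * (x - y)| <= eta * `|x - y|.
  rewrite -normrN distrC; have -> : - (Psi s x - Psi s y - dx Psi t0 x0 * (x - y)) =
      Psi s y - Psi s x - dx Psi t0 x0 * (y - x) by ring.
  apply: (mvt_linear_approx (g := Psi s) (x0 := x0) (r := rho)) => // w wr; split.
    by have [_ dxs _ _] := C2 s w (pos s sr); exact: dxs.
  by apply/ltW/near_dx; [exact: (lt_r _ _ sr).2 | exact: (lt_r _ _ wr).2].
have -> : Psi t x - Psi s y - (dt Psi t0 x0 * (t - s) + dx Psi t0 x0 * (x - y)) =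
    (Psi t x - Psi s x - dt Psi t0 x0 * (t - s)) +
    (Psi s x - Psi s y - dx Psi t0 x0 * (x - y)) by ring.
rewrite [eta * _]mulrDr; apply: le_trans (ler_normD _ _) _; exact: lerD.
Qed.

End real_analysis.

Lemma ltr_norm_sqr (R : realFieldType) (u k : R) : 0 < k -> u ^+ 2 < k ^+ 2 -> `|u| < k.
Proof. by move=> k0 uk; rewrite ltr_norml; apply/andP; split; nra. Qed.

Lemma sqr_shift_lb (R : realFieldType) (s c u k : R) :
  `|s - c| <= k -> - (2 * k * `|u| + u ^+ 2) <= (s - c) ^+ 2 - (s - u - c) ^+ 2.
Proof.
move=> sck; have /andP[su _] : - `|(s - c) * u| <= (s - c) * u <= `|(s - c) * u|.
  by rewrite -ler_norml.
have : `|s - c| * `|u| <= k * `|u| by rewrite ler_wpM2r.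
by rewrite normrM in su; nra.
Qed.

Lemma penalty_budget (R : realFieldType) (eta k eps dl L u w : R) :
  0 < eps -> 0 <= eta -> 0 <= k -> 0 <= u -> u + `|w| + eps <= eps * L ->
  eta * L <= dl / 4 -> k * L <= dl / 8 -> eps * L <= k / 2 ->
  (eta + 2 * k) * (u + `|w|) + (u ^+ 2 + w ^+ 2 + eps ^+ 2) <= dl * eps.
Proof.
move=> eps0 eta0 k0 u0 uwL etaL kL epsL.
have w0 := normr_ge0 w; set v := u + `|w| in uwL *.
have v0 : 0 <= v by rewrite /v; lra.
have L0 : 0 <= L by nra.
have E1 : eta * v <= eps * (eta * L) by rewrite mulrCA ler_wpM2l//; lra.
have E2 : k * v <= eps * (k * L) by rewrite mulrCA ler_wpM2l//; lra.
have E3 : u ^+ 2 + w ^+ 2 + eps ^+ 2 <= eps * (eps * L * L).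
  have : (v + eps) ^+ 2 <= (eps * L) ^+ 2 by rewrite ler_pXn2r// ?nnegrE; lra.
  by have := real_normK (num_real w); rewrite /v; nra.
have : eps * L * L <= k / 2 * L by rewrite ler_wpM2r.
have : eps * (eta * L) <= eps * (dl / 4) by rewrite ler_wpM2l ?(ltW eps0).
have : eps * (k * L) <= eps * (dl / 8) by rewrite ler_wpM2l ?(ltW eps0).
nra.
Qed.

Section penalization.
Variables (R : realType) (T : R) (psi : R -> R -> R -> R) (epsn : nat -> R).
Variables (psi0 Psi : R -> R -> R) (t0 x0 d : R).
Hypothesis epsn_gt0 : forall n, 0 < epsn n.
Hypothesis epsn_cvg0 : epsn @ \oo --> 0.
Hypothesis psi_cvg : forall X e : R, 0 < e -> exists N : nat, forall n t x, (N <= n)%N ->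
  0 <= t <= T -> `|x| <= X -> `|psi (epsn n) t x - psi0 t x| < e.
Hypothesis Psi_C2 : C2_pos Psi.
Hypotheses (t0_gt0 : 0 < t0) (t0_ltT : t0 < T) (d_gt0 : 0 < d).
Hypothesis local_max : forall t x, `|t - t0| < d -> `|x - x0| < d ->
  psi0 t x - Psi t x <= psi0 t0 x0 - Psi t0 x0.

Let pen s y := Psi s y + (s - t0) ^+ 2 + (y - x0) ^+ 2.

Lemma penalized_approx_max (r k h : R) :
  0 < r -> r < d -> r < t0 -> r <= T - t0 -> 0 < k -> 0 < h -> 2 * h <= k ->
  exists eps t x, [/\ 0 < eps, eps < h, `|t - t0| < k, `|x - x0| < k &
    forall s y, `|s - t0| <= r -> `|y - x0| <= r ->
      psi eps s y - pen s y <= psi eps t x - pen t x + eps ^+ 2].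
Proof.
move=> r0 rd rt0 rT k0 h0 hk.
have e0 : 0 < k ^+ 2 / 4 by rewrite divr_gt0// exprn_gt0.
have [N1 psi_close] := psi_cvg (`|x0| + r) e0.
have [N2 _ epsn_small] : \forall n \near \oo, `|0 - epsn n| < h.
  by move/cvgrPdist_lt : epsn_cvg0 => /(_ h h0).
set eps := epsn (maxn N1 N2); have eps0 : 0 < eps := epsn_gt0 _.
have epsh : eps < h.
  by have := epsn_small _ (leq_maxr N1 N2); rewrite sub0r normrN gtr0_norm.
pose B (p : R * R) := `|p.1 - t0| <= r /\ `|p.2 - x0| <= r.
have B0 : B (t0, x0) by rewrite /B /= !subrr normr0; split; exact: ltW.
have close s y : B (s, y) -> `|psi eps s y - psi0 s y| < k ^+ 2 / 4.
  move=> [/= sr yr]; apply: psi_close; first exact: leq_maxl.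
    by move: sr; rewrite ler_norml => /andP[? ?]; apply/andP; split; lra.
  by rewrite -[y](subrK x0) (le_trans (ler_normD _ _))// addrC lerD2l.
have below s y : B (s, y) -> psi0 s y - Psi s y <= psi0 t0 x0 - Psi t0 x0.
  by move=> [/= sr yr]; apply: local_max; apply: le_lt_trans rd.
pose f (p : R * R) := psi eps p.1 p.2 - pen p.1 p.2.
have f_ub : exists M, forall p, B p -> f p <= M.
  exists (psi0 t0 x0 - Psi t0 x0 + k ^+ 2 / 4) => -[s y] Bsy.
  have := sqr_ge0 (s - t0); have := sqr_ge0 (y - x0).
  have := close s y Bsy; have := below s y Bsy; rewrite /f /pen ltr_distlC /=.
  by move=> ? /andP[? _] ? ?; lra.
have [[t x] Btx maxtx] := approx_argmax (exprn_gt0 2 eps0) (ex_intro _ _ B0) f_ub.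
have Q : (t - t0) ^+ 2 + (x - x0) ^+ 2 < k ^+ 2.
  have : 4 * eps ^+ 2 <= k ^+ 2 by nra.
  have := maxtx _ B0; have := close t x Btx; have := close t0 x0 B0.
  have := below t x Btx; rewrite /f /pen /= !subrr expr0n /= !addr0 !ltr_distlC.
  by move=> ? /andP[? ?] /andP[? ?] ? ?; lra.
exists eps, t, x; split => //; try apply: ltr_norm_sqr => //.
- by have := sqr_ge0 (x - x0); lra.
- by have := sqr_ge0 (t - t0); lra.
by move=> s y sr yr; exact: (maxtx (s, y)).
Qed.

Lemma approx_max_increment_lb (f : R -> R -> R) (eta rho r k h t x u w : R) :
  tangent_approx Psi t0 x0 eta rho -> r < rho -> k <= r -> `|t - t0| < k -> `|x - x0| < k ->
  (forall s y, `|s - t0| <= r -> `|y - x0| <= r -> f s y - pen s y <= f t x - pen t x + h) ->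
  0 <= u -> `|t - u - t0| <= r -> `|x - w - x0| <= r ->
  dt Psi t0 x0 * u + dx Psi t0 x0 * w - ((eta + 2 * k) * (u + `|w|) + (u ^+ 2 + w ^+ 2 + h))
    <= f t x - f (t - u) (x - w).
Proof.
move=> Psi_tan rrho kr tk xk fmax u0 sr yr.
have := fmax _ _ sr yr; rewrite /pen => max_tx.
have := Psi_tan t x (t - u) (x - w) ltac:(lra) ltac:(lra) ltac:(lra) ltac:(lra).
rewrite !subKr (ger0_norm u0) ler_distlC => /andP[_ Psi_inc].
have Qt := sqr_shift_lb u (ltW tk); have Qx := sqr_shift_lb w (ltW xk).
rewrite (ger0_norm u0) in Qt; lra.
Qed.

Lemma approx_max_quotient_lb (f : R -> R -> R) (A Z dl eta rho r k eps t x : R) :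
  tangent_approx Psi t0 x0 eta rho -> r < rho -> 2 * k <= r ->
  `|t - t0| < k -> `|x - x0| < k ->
  (forall s y, `|s - t0| <= r -> `|y - x0| <= r ->
     f s y - pen s y <= f t x - pen t x + eps ^+ 2) ->
  0 < eps -> 0 <= eta -> eps * (A + Z + 1) <= k / 2 ->
  eta * (A + Z + 1) <= dl / 4 -> k * (A + Z + 1) <= dl / 8 ->
  forall a z, 0 <= a <= A -> `|z| <= Z ->
    a * dt Psi t0 x0 + z * dx Psi t0 x0 - dl <= (f t x - f (t - eps * a) (x - eps * z)) / eps.
Proof.
move=> Psi_tan rrho kr tk xk fmax eps0 eta0 epsL etaL kL a z /andP[a0 aA] zZ.
have k0 : 0 < k by apply: le_lt_trans tk.
rewrite ler_pdivlMr// (_ : _ * eps = dt Psi t0 x0 * (eps * a) + dx Psi t0 x0 * (eps * z)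
  - dl * eps); last by ring.
set u := eps * a; set w := eps * z.
have u0 : 0 <= u by rewrite mulr_ge0// ltW.
have uwL : u + `|w| + eps <= eps * (A + Z + 1).
  have : u <= eps * A by rewrite ler_wpM2l// ltW.
  have : `|w| <= eps * Z by rewrite normrM gtr0_norm// ler_wpM2l// ltW.
  lra.
have [u_le w_le] : u <= k / 2 /\ `|w| <= k / 2 by have := normr_ge0 w; split; lra.
have tu : `|t - u - t0| <= r.
  by move: tk; rewrite ltr_norml ler_norml => /andP[? ?]; apply/andP; split; lra.
have xw : `|x - w - x0| <= r.
  rewrite (_ : x - w - x0 = (x - x0) - w); last by ring.
  by apply: le_trans (ler_normB _ _) _; lra.
have kr' : k <= r by lra.
have := approx_max_increment_lb Psi_tan rrho kr' tk xk fmax u0 tu xw.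
have := penalty_budget eps0 eta0 (ltW k0) u0 uwL etaL kL epsL.
lra.
Qed.

Lemma psi_quotient_lb (A Z dl : R) : 0 <= A -> 0 <= Z -> 0 < dl ->
  exists eps t x : R, [/\ 0 < eps, 0 < t, A <= t / eps &
    forall a z, 0 <= a <= A -> `|z| <= Z ->
      a * dt Psi t0 x0 + z * dx Psi t0 x0 - dl <=
        (psi eps t x - psi eps (t - eps * a) (x - eps * z)) / eps].
Proof.
move=> A0 Z0 dl0; set L := A + Z + 1; have L1 : 1 <= L by rewrite /L; lra.
set eta := dl / (4 * L); have eta0 : 0 < eta by rewrite divr_gt0 ?mulr_gt0//; lra.
have [rho rho0 Psi_tan] := C2_pos_tangent_approx x0 Psi_C2 t0_gt0 eta0.
have Tt0 : 0 < T - t0 by rewrite subr_gt0.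
have [m1 m10 [m1rho m1d]] := exists_pos_le2 rho0 d_gt0.
have [m2 m20 [m2t0 m2T]] := exists_pos_le2 t0_gt0 Tt0.
have [m m0 [mm1 mm2]] := exists_pos_le2 m10 m20.
have k10 : 0 < m / 4 by rewrite divr_gt0.
have k20 : 0 < dl / (8 * L) by rewrite divr_gt0 ?mulr_gt0//; lra.
have [k k0 [km kdl]] := exists_pos_le2 k10 k20.
have h0 : 0 < k / (2 * L) by rewrite divr_gt0 ?mulr_gt0//; lra.
have hk : 2 * (k / (2 * L)) <= k.
  rewrite (_ : 2 * (k / (2 * L)) = k / L); last by field; lra.
  by rewrite ler_pdivrMr; nra.
have [r0 rd rt0 rT] : [/\ 0 < m / 2, m / 2 < d, m / 2 < t0 & m / 2 <= T - t0].
  by split; lra.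
have [eps [t [x [eps0 epsh tk xk tx_max]]]] := penalized_approx_max r0 rd rt0 rT k0 h0 hk.
have epsL : eps * L <= k / 2 by move: epsh; rewrite ltr_pdivlMr ?mulr_gt0//; lra.
have etaL : eta * L <= dl / 4.
  by rewrite (_ : eta * L = dl / 4) // /eta; field; lra.
have kL : k * L <= dl / 8 by move: kdl; rewrite ler_pdivlMr ?mulr_gt0//; lra.
exists eps, t, x; split.
- exact: eps0.
- by move: tk; rewrite ltr_norml => /andP[? ?]; lra.
- have : A * eps <= L * eps by rewrite ler_wpM2r ?(ltW eps0)// /L; lra.
  by move: tk; rewrite ler_pdivlMr// ltr_norml => /andP[? ?]; nra.
have rrho : m / 2 < rho by lra.
have kr : 2 * k <= m / 2 by lra.
exact: approx_max_quotient_lb Psi_tan rrho kr tk xk tx_max eps0 (ltW eta0) epsL etaL kL.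
Qed.

End penalization.

Theorem proposition6 (R : realType) (mu sigma T : R)
  (v : R -> R) (eta : R -> R -> R)
  (psi : R -> R -> R -> R) (* psi eps t x = psi_eps(t,x) *)
  (epsn : nat -> R) (psi0 : R -> R -> R) :
  0 < mu < 1 -> 0 < sigma -> 0 < T ->
  (* (H1) *)
  (exists M : R, forall x, `|v x| <= M) ->
  (* (H2) *)
  (@lebesgue_measure R).-integrable `[0%R, 1%R[
     (fun a => expeR (- ereal_inf [set (eta x a)%:E | x in [set: R]]))%E ->
  (* (H3) *)
  (exists C : R, forall eps x : R, 0 < eps ->
     ((expR (- C / eps))%:E <
      \int[@lebesgue_measure R]_(a in `[0%R, 1%R[)
        \int[@lebesgue_measure R]_(z in [set: R])
          (Phi mu a * omega sigma z * expR (Bint mu a)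
             * expR (- eta (x - eps * z) a))%:E)%E) ->
  (* (H4) *)
  (exists L : R, forall eps a x y, 0 < eps < 1 -> 0 <= a < 1 ->
     `|phi0 v eta eps x a - phi0 v eta eps y a| <= L * `|x - y|) ->
  (* (H5) *)
  (exists Cxx : R, forall eps a, 0 < eps -> 0 <= a < 1 ->
     dist_d2_le (fun x => phi0 v eta eps x a) Cxx) ->
  (* psi_eps(0,x) = phi^0_eps(x,0) *)
  (forall eps x, 0 < eps -> psi eps 0 x = phi0 v eta eps x 0) ->
  (* the renewal equation satisfied by psi_eps, t > 0 *)
  (forall eps t x : R, 0 < eps -> 0 < t ->
     (1%:E =
      \int[@lebesgue_measure R]_(a in `[0%R, (t / eps)%R])
        \int[@lebesgue_measure R]_(z in [set: R])
          (Phi mu a * omega sigma z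
             * expR ((psi eps t x - psi eps (t - eps * a) (x - eps * z)) / eps))%:E
      + \int[@lebesgue_measure R]_(a in `[0%R, 1%R[)
        \int[@lebesgue_measure R]_(z in [set: R])
          (Phi mu (a + t / eps) * omega sigma z
             * expR ((psi eps t x - phi0 v eta eps (x - eps * z) a) / eps
                     + Bint mu a))%:E)%E) ->
  (* subsequence eps_n -> 0 *)
  (forall n, 0 < epsn n) -> epsn @ \oo --> 0 ->
  (* psi_{eps_n} -> psi0 locally uniformly on [0,T] x R *)
  (forall X e : R, 0 < e -> exists N : nat, forall n t x, (N <= n)%N ->
     0 <= t <= T -> `|x| <= X -> `|psi (epsn n) t x - psi0 t x| < e) ->
  (* viscosity subsolution property *)
  forall (Psi : R -> R -> R) (t0 x0 : R),
    C2_pos Psi -> 0 < t0 < T ->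
    (exists2 d : R, 0 < d & forall t x, `|t - t0| < d -> `|x - x0| < d ->
       psi0 t x - Psi t x <= psi0 t0 x0 - Psi t0 x0) ->
    (\int[@lebesgue_measure R]_(a in `[0%R, +oo[)
       \int[@lebesgue_measure R]_(z in [set: R])
         (Phi mu a * omega sigma z
            * expR (a * dt Psi t0 x0 + z * dx Psi t0 x0))%:E <= 1)%E.
Proof.
move=> /andP[mu0 _] sigma0 _ _ _ _ _ _ _ renewal epsn_gt0 epsn_cvg0 psi_cvg
  Psi t0 x0 Psi_C2 /andP[t0_gt0 t0_ltT] [d d_gt0 local_max].
under eq_integral do under eq_integral do rewrite expRD mulrACA.
apply: ge0_integral_prod_le1 (measurable_Phi_expR _ _) (measurable_omega_expR _ _) _.
- exact: measurable_itv.
- move=> a; rewrite /= in_itv/= andbT => a0.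
  exact: mulr_ge0 (Phi_ge0 (ltW mu0) a0) (expR_ge0 _).
- by move=> z; exact: mulr_ge0 (omega_ge0 _ (ltW sigma0)) (expR_ge0 _).
move=> A Z c /andP[c0 c1]; have dl0 : 0 < - ln c by rewrite oppr_gt0 ln_lt0 ?c0.
have [eps [t [x [eps0 t_gt0 At lb]]]] := psi_quotient_lb epsn_gt0 epsn_cvg0
  psi_cvg Psi_C2 t0_gt0 t0_ltT d_gt0 local_max (ler0n _ A) (ler0n _ Z) dl0.
rewrite -[c]lnK ?posrE// -[ln c]opprK; apply: (renewal_truncated_le1 mu0 sigma0 At lb).
rewrite [leRHS](renewal eps t x eps0 t_gt0) leeDl//.
apply: integral_ge0 => a; rewrite /= in_itv/= => /andP[a0 _]; apply: integral_ge0 => z _.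
have ta0 : 0 <= a + t / eps by rewrite addr_ge0// divr_ge0// ltW.
rewrite lee_fin; apply: mulr_ge0 (expR_ge0 _).
exact: mulr_ge0 (Phi_ge0 (ltW mu0) ta0) (omega_ge0 _ (ltW sigma0)).
Qed.
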